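(* Let $\Delta t_{\mathrm{CFL,gen}}$ be the generalized CFL limit of the whole region and, for each $1\le i\le n_x$, $1\le j\le n_y$, $1\le k\le n_z$, let $\Delta t^{(i,j,k)}_{\mathrm{CFL,gen}}$ be the generalized CFL limit of the single-cell region ($n_x=n_y=n_z=1$) formed by the primary cell with corners $(i,j,k)$ and $(i+1,j+1,k+1)$, with the same $\hbar,m,\Delta x,\Delta y,\Delta z$ and with potential $U_{i+a,j+b,k+c}$ ($a,b,c\in\{0,1\}$) at its local node $(a+1,b+1,c+1)$. Then $$\min_{i,j,k}\Delta t^{(i,j,k)}_{\mathrm{CFL,gen}}\le\Delta t_{\mathrm{CFL,gen}}.$$
   Context: Fix constants $\hbar>0$, $m>0$, cell sizes $\Delta x,\Delta y,\Delta z>0$ and positive integers $n_x,n_y,n_z$. A region is a box of $n_x\times n_y\times n_z$ primary cells of size $\Delta x\times\Delta y\times\Delta z$ with primary nodes $(i,j,k)$, $1\le i\le n_x+1$, $1\le j\le n_y+1$, $1\le k\le n_z+1$. Let $N=(n_x+1)(n_y+1)(n_z+1)$; node-indexed vectors use the ordering $i+(j-1)(n_x+1)+(k-1)(n_x+1)(n_y+1)$. Real potential values $U_{i,j,k}$ are given at the nodes; $D_U$ is the $N\times N$ diagonal matrix containing them. Let $I_p$ be the $p\times p$ identity, $\tilde I_p=\mathrm{diag}(\tfrac12,1,\dots,1,\tfrac12)$ ($p\times p$; $\tilde I_2=\tfrac12I_2$), $W_p=[0_{p\times1}\ I_p]-[I_p\ 0_{p\times 1}]$ ($p\times(p+1)$),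 $\otimes$ the Kronecker product. For a region define $D_V''=\Delta x\Delta y\Delta z\,\tilde I_{n_z+1}\otimes\tilde I_{n_y+1}\otimes\tilde I_{n_x+1}$; $D=[D_x\ D_y\ D_z]$ with $D_x=-I_{n_z+1}\otimes I_{n_y+1}\otimes W_{n_x}^T$, $D_y=-I_{n_z+1}\otimes W_{n_y}^T\otimes I_{n_x+1}$, $D_z=-W_{n_z}^T\otimes I_{n_y+1}\otimes I_{n_x+1}$; $D_S''=\mathrm{diag}(\Delta y\Delta z\,\tilde I_{n_z+1}\otimes\tilde I_{n_y+1}\otimes I_{n_x},\ \Delta x\Delta z\,\tilde I_{n_z+1}\otimes I_{n_y}\otimes\tilde I_{n_x+1},\ \Delta x\Delta y\,I_{n_z}\otimes\tilde I_{n_y+1}\otimes\tilde I_{n_x+1})$; $D_l'=\mathrm{diag}(\Delta x\, I_{n_x(n_y+1)(n_z+1)},\ \Delta y\, I_{(n_x+1)n_y(n_z+1)},\ \Delta z\, I_{(n_x+1)(n_y+1)n_z})$; $H=\frac{\hbar^2}{2m}D D_S''(D_l')^{-1}D^T+D_V''D_U$. The generalized CFL limit of a region is $\Delta t_{\mathrm{CFL,gen}}=2/\rho\!\left(\frac{1}{\hbar}(D_V'')^{-1/2}H(D_V'')^{-1/2}\right)$, with $\rho$ the spectral radius. *)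

From HB Require Import structures.
From mathcomp Require Import all_boot all_order all_algebra.
From mathcomp Require Import classical_sets reals.
From mathcomp Require Import complex mxtens.
Set Implicit Arguments. Unset Strict Implicit. Unset Printing Implicit Defensive.
Import Order.TTheory GRing.Theory Num.Theory.
Local Open Scope ring_scope.
Local Open Scope classical_set_scope.

Section CFL.
Variable R : realType.

Definition spectral_radius (n : nat) (A : 'M[R]_n) : R :=
  sup [set r : R | exists l : R[i],
        eigenvalue (map_mx (fun x : R => Complex x 0) A) l /\ r = complex.Re `|l|].

Definition Itil (n : nat) : 'M[R]_n.+1 :=
  diag_mx (\row_(i < n.+1) (if (i == ord0) || (i == ord_max) then 2^-1 else 1)).

Definition Wmx (p : nat) : 'M[R]_(p, p.+1) :=
  row_mx (0 : 'M_(p, 1)) (1%:M : 'M_p)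
  - castmx (erefl p, addn1 p) (row_mx (1%:M : 'M_p) (0 : 'M_(p, 1))).

Section Region.
Variables (hbar m dx dy dz : R) (nx ny nz : nat).
(* potential at primary node (i,j,k), 0-indexed: i < nx+1 etc. *)
Variable U : 'I_nx.+1 -> 'I_ny.+1 -> 'I_nz.+1 -> R.

(* node index set, ordered as i + (j-1)(nx+1) + (k-1)(nx+1)(ny+1)
   via the Kronecker product index  k*((ny+1)(nx+1)) + (j*(nx+1) + i) *)
Local Notation N := (nz.+1 * (ny.+1 * nx.+1))%N.
Local Notation Ex := (nz.+1 * (ny.+1 * nx))%N.
Local Notation Ey := (nz.+1 * (ny * nx.+1))%N.
Local Notation Ez := (nz * (ny.+1 * nx.+1))%N.

Definition DU : 'M[R]_N :=
  diag_mx (\row_(p < N)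
    let kr := mxtens_unindex p in
    let ji := mxtens_unindex kr.2 in U ji.2 ji.1 kr.1).

Definition DV : 'M[R]_N := (dx * dy * dz) *: (Itil nz *t (Itil ny *t Itil nx)).

Definition Dx : 'M[R]_(N, Ex) :=
  - ((1%:M : 'M_nz.+1) *t ((1%:M : 'M_ny.+1) *t (Wmx nx)^T)).
Definition Dy : 'M[R]_(N, Ey) :=
  - ((1%:M : 'M_nz.+1) *t ((Wmx ny)^T *t (1%:M : 'M_nx.+1))).
Definition Dz : 'M[R]_(N, Ez) :=
  - ((Wmx nz)^T *t ((1%:M : 'M_ny.+1) *t (1%:M : 'M_nx.+1))).
Definition Dmx : 'M[R]_(N, Ex + (Ey + Ez)) := row_mx Dx (row_mx Dy Dz).

Definition DS : 'M[R]_(Ex + (Ey + Ez)) :=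
  block_mx ((dy * dz) *: (Itil nz *t (Itil ny *t (1%:M : 'M_nx)))) 0 0
    (block_mx ((dx * dz) *: (Itil nz *t ((1%:M : 'M_ny) *t Itil nx))) 0 0
              ((dx * dy) *: ((1%:M : 'M_nz) *t (Itil ny *t Itil nx)))).

Definition Dl : 'M[R]_(Ex + (Ey + Ez)) :=
  block_mx (dx%:M : 'M_Ex) 0 0 (block_mx (dy%:M : 'M_Ey) 0 0 (dz%:M : 'M_Ez)).

Definition Hmx : 'M[R]_N :=
  (hbar ^+ 2 / (2 * m)) *: (Dmx *m DS *m invmx Dl *m Dmx^T) + DV *m DU.

(* (D_V'')^{-1/2}: D_V'' is diagonal with positive entries *)
Definition DVinvsqrt : 'M[R]_N := diag_mx (\row_(p < N) (Num.sqrt (DV p p))^-1).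

Definition cfl_gen : R :=
  2 / spectral_radius (hbar^-1 *: (DVinvsqrt *m Hmx *m DVinvsqrt)).
End Region.

Definition cfl_cell (hbar m dx dy dz : R) (nx ny nz : nat)
  (U : 'I_nx.+1 -> 'I_ny.+1 -> 'I_nz.+1 -> R) (i : 'I_nx) (j : 'I_ny) (k : 'I_nz) : R :=
  @cfl_gen hbar m dx dy dz 1%N 1%N 1%N
    (fun (a : 'I_2) (b : 'I_2) (c : 'I_2) =>
       U (inord (i + a)) (inord (j + b)) (inord (k + c))).
End CFL.

From HB Require Import structures.
From mathcomp Require Import all_boot all_order all_algebra.
From mathcomp Require Import classical_sets reals complex mxtens sesquilinear spectral.
From mathcomp Require Import ring lra zify.
Import Order.TTheory GRing.Theory Num.Theory.
Set Implicit Arguments. Unset Strict Implicit. Unset Printing Implicit Defensive.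
Local Open Scope ring_scope.

(* Both quadratic forms u^T H u and u^T D_V'' u of a region are sums over its
   primary cells of the corresponding forms of the single-cell regions, because
   the trapezoidal weights diag(1/2, 1, ..., 1, 1/2) on [0..n] are the sum of the
   weights (1/2, 1/2) of the n unit cells.  The spectral radius rho of the
   symmetric matrix hbar^-1 D_V''^{-1/2} H D_V''^{-1/2} is the best constant in
   hbar^-1 |u^T H u| <= rho u^T D_V'' u, so rho is at most the largest of the cell
   radii, i.e. 2 / rho is at least the smallest cell limit.  The degenerate case
   rho = 0, where 2 / rho would be 0, is excluded by testing H on the sum and the
   difference of two adjacent nodal vectors. *)

Section RealSymmetricMatrices.
Variable R : realType.
Local Open Scope sesquilinear_scope.
Local Open Scope classical_set_scope.
Local Notation toC A := (map_mx (real_complex R) A).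

Definition dot n (u w : 'rV[R]_n) : R := (u *m w^T) 0 0.
Definition qform n (A : 'M[R]_n) (u : 'rV[R]_n) : R := (u *m A *m u^T) 0 0.

Lemma dotC n (u w : 'rV[R]_n) : dot u w = dot w u.
Proof. by rewrite /dot -[(u *m w^T)%R]trmxK trmx_mul trmxK mxE. Qed.

Lemma dotDl n (u v w : 'rV[R]_n) : dot (u + v) w = dot u w + dot v w.
Proof. by rewrite /dot mulmxDl mxE. Qed.

Lemma dotBl n (u v w : 'rV[R]_n) : dot (u - v) w = dot u w - dot v w.
Proof. by rewrite /dot mulmxBl !mxE. Qed.

Lemma dotZl n c (u w : 'rV[R]_n) : dot (c *: u) w = c * dot u w.
Proof. by rewrite /dot -scalemxAl mxE. Qed.

Lemma dotE n (u w : 'rV[R]_n) : dot u w = \sum_j u 0 j * w 0 j.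
Proof. by rewrite /dot !mxE; apply: eq_bigr => j _; rewrite mxE. Qed.

Lemma dot_ge0 n (u : 'rV[R]_n) : 0 <= dot u u.
Proof. by rewrite dotE sumr_ge0 // => j _; rewrite -expr2 sqr_ge0. Qed.

Lemma dot_eq0 n (u : 'rV[R]_n) : dot u u = 0 -> u = 0.
Proof.
rewrite dotE => /psumr_eq0P u0; apply/rowP => j; rewrite mxE.
have /eqP := u0 (fun j _ => sqr_ge0 (u 0 j)) j isT.
by rewrite mulf_eq0 orbb => /eqP.
Qed.

Lemma dot_delta n (i : 'I_n) : dot (delta_mx 0 i) (delta_mx 0 i) = 1.
Proof.
rewrite dotE (bigD1 i) //= !mxE !eqxx mulr1 big1 ?addr0 // => j /negPf ji.
by rewrite !mxE ji mulr0.
Qed.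

Lemma bilinear_sym n (A : 'M[R]_n) (a b : 'rV[R]_n) : A^T = A ->
  (a *m A *m b^T) 0 0 = (b *m A *m a^T) 0 0.
Proof.
move=> sA; transitivity ((a *m A *m b^T)^T 0 0); first by rewrite [RHS]mxE.
by rewrite !trmx_mul trmxK sA mulmxA.
Qed.

Lemma Re_sum (I : Type) (r : seq I) (P : pred I) (F : I -> R[i]) :
  complex.Re (\sum_(i <- r | P i) F i) = \sum_(i <- r | P i) complex.Re (F i).
Proof. by apply: (big_morph (@complex.Re R)) => // -[x1 y1] [x2 y2]. Qed.

Lemma Im_sum (I : Type) (r : seq I) (P : pred I) (F : I -> R[i]) :
  complex.Im (\sum_(i <- r | P i) F i) = \sum_(i <- r | P i) complex.Im (F i).
Proof. by apply: (big_morph (@complex.Im R)) => // -[x1 y1] [x2 y2]. Qed.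

Lemma Re_mulmx_real n (v : 'rV[R[i]]_n) (A : 'M[R]_n) :
  map_mx (@complex.Re R) (v *m toC A) = map_mx (@complex.Re R) v *m A.
Proof.
apply/rowP => k; rewrite !mxE Re_sum; apply: eq_bigr => j _; rewrite !mxE.
by case: (v 0 j) => x y /=; rewrite mulr0 subr0.
Qed.

Lemma Im_mulmx_real n (v : 'rV[R[i]]_n) (A : 'M[R]_n) :
  map_mx (@complex.Im R) (v *m toC A) = map_mx (@complex.Im R) v *m A.
Proof.
apply/rowP => k; rewrite !mxE Im_sum; apply: eq_bigr => j _; rewrite !mxE.
by case: (v 0 j) => x y /=; rewrite mulr0 add0r.
Qed.

Lemma eigenvalue_norm_le n (A : 'M[R]_n) (M : R) (l : R[i]) :
  A^T = A -> (forall x : 'rV[R]_n, `|qform A x| <= M * dot x x) ->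
  eigenvalue (toC A) l -> complex.Re `|l| <= M.
Proof.
move=> sA leM /eigenvalueP [v vA v_neq0].
set a := map_mx (@complex.Re R) v; set b := map_mx (@complex.Im R) v.
have aA : a *m A = complex.Re l *: a - complex.Im l *: b.
  rewrite -Re_mulmx_real vA; apply/rowP => k; rewrite !mxE.
  by case: (l) => ? ?; case: (v 0 k).
have bA : b *m A = complex.Im l *: a + complex.Re l *: b.
  rewrite -Im_mulmx_real vA; apply/rowP => k; rewrite !mxE.
  by case: (l) => ? ?; case: (v 0 k) => ? ? /=; rewrite addrC.
have ab_gt0 : 0 < dot a a + dot b b.
  rewrite lt_def paddr_eq0 ?dot_ge0 // addr_ge0 ?dot_ge0 // andbT.
  apply: contra v_neq0 => /andP [/eqP/dot_eq0 a0 /eqP/dot_eq0 b0].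
  apply/eqP/rowP => j; move/rowP: a0 => /(_ j); move/rowP: b0 => /(_ j).
  by rewrite !mxE; case: (v 0 j) => x y /= -> ->.
have Im_l0 : complex.Im l = 0.
  have := bilinear_sym a b sA; rewrite -/(dot (a *m A) b) -/(dot (b *m A) a).
  rewrite aA bA dotBl dotDl !dotZl (dotC b a) => e.
  have /eqP : complex.Im l * (dot a a + dot b b) = 0 by rewrite mulrDr; lra.
  by rewrite mulf_eq0 (gt_eqF ab_gt0) orbF => /eqP.
have qformE : qform A a + qform A b = complex.Re l * (dot a a + dot b b).
  rewrite /qform -/(dot (a *m A) a) -/(dot (b *m A) b) aA bA Im_l0.
  by rewrite dotBl dotDl !dotZl (dotC b a); ring.
have -> : complex.Re `|l| = `|complex.Re l|.
  by rewrite normc_def /= Im_l0 expr0n /= addr0 sqrtr_sqr.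
rewrite -(ler_pM2r ab_gt0) -[X in _ * X <= _](gtr0_norm ab_gt0) -normrM -qformE.
by rewrite mulrDr (le_trans (ler_normD _ _)) // lerD.
Qed.

Lemma qform_crude_bound n (A : 'M[R]_n) :
  exists M : R, forall x : 'rV[R]_n, `|qform A x| <= M * dot x x.
Proof.
exists (\sum_i \sum_j `|A i j|) => x.
have qformE : qform A x = \sum_j \sum_i x 0 i * A i j * x 0 j.
  by rewrite /qform !mxE; apply: eq_bigr => j _; rewrite !mxE mulr_suml.
have le_dot i j : `|x 0 i| * `|x 0 j| <= dot x x.
  have sqr_le k : `|x 0 k| ^+ 2 <= dot x x.
    rewrite real_normK ?num_real // dotE (bigD1 k) //= -expr2 lerDl.
    by rewrite sumr_ge0 // => l _; rewrite -expr2 sqr_ge0.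
  have := sqr_ge0 (`|x 0 i| - `|x 0 j|); have := sqr_le i; have := sqr_le j.
  nra.
rewrite qformE exchange_big /= mulr_suml (le_trans (ler_norm_sum _ _ _)) //.
apply: ler_sum => i _; rewrite mulr_suml (le_trans (ler_norm_sum _ _ _)) //.
apply: ler_sum => j _; rewrite !normrM [_ * `|A i j|]mulrC -mulrA.
by rewrite ler_wpM2l.
Qed.

Local Notation eigenmoduli A :=
  [set r : R | exists l : R[i], eigenvalue (toC A) l /\ r = complex.Re `|l|].

Lemma eigenmoduli_has_ubound n (A : 'M[R]_n) :
  A^T = A -> has_ubound (eigenmoduli A).
Proof.
move=> sA; have [M leM] := qform_crude_bound A.
by exists M => r [l [Al ->]]; exact: eigenvalue_norm_le sA leM Al.
Qed.

Lemma eigenvalue_le_spectral_radius n (A : 'M[R]_n) (l : R[i]) : A^T = A ->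
  eigenvalue (toC A) l -> complex.Re `|l| <= spectral_radius A.
Proof.
by move=> sA Al; apply: (ub_le_sup (eigenmoduli_has_ubound sA)); exists l.
Qed.

Lemma spectral_radius_le n (A : 'M[R]_n) (M : R) : (0 < n)%N -> A^T = A ->
  (forall x : 'rV[R]_n, `|qform A x| <= M * dot x x) -> spectral_radius A <= M.
Proof.
move=> n_gt0 sA leM; apply: ge_sup.
  by have [l Al] := eigenvalue_closed (toC A) n_gt0; exists (complex.Re `|l|), l.
by move=> r [l [Al ->]]; exact: eigenvalue_norm_le sA leM Al.
Qed.

Lemma delta_mul_diag (C : pzRingType) n (d : 'rV[C]_n) (i : 'I_n) :
  (delta_mx 0 i : 'rV[C]_n) *m diag_mx d = d 0 i *: delta_mx 0 i.
Proof.
apply/rowP => j; rewrite mul_mx_diag !mxE.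
by case: (eqVneq j i) => [->|ji]; rewrite ?andbF ?mul0r ?mulr0 // ?eqxx ?mulr1 ?mul1r.
Qed.

Lemma normC_real (x : R) : `|real_complex R x| = real_complex R `|x|.
Proof. by rewrite normc_def /= expr0n /= addr0 sqrtr_sqr. Qed.

(* Diagonalize the hermitian complexification [toC A = P^* diag(d) P]:
   every [d_i] is an eigenvalue, and [x A x^T = sum_i d_i |(x P^* )_i|^2]. *)
Lemma normr_qform_le_spectral_radius n (A : 'M[R]_n) (x : 'rV[R]_n) :
  A^T = A -> `|qform A x| <= spectral_radius A * dot x x.
Proof.
move=> sA; set Ac := toC A.
have Ac_herm : Ac \is hermsymmx.
  apply/is_hermitianmxP; rewrite expr0 scale1r; apply/matrixP => i j.
  by rewrite !mxE conj_Creal ?complex_real // -{1}sA mxE.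
have /orthomx_spectralP := hermitian_normalmx Ac_herm.
set P := spectralmx Ac; set d := spectral_diag Ac => AcE.
have P_unitary : P \is unitarymx := spectral_unitarymx Ac.
have P_unit : P \in unitmx := spectral_unit Ac.
rewrite invmx_unitary // in AcE.
have d_eigen i : eigenvalue Ac (d 0 i).
  apply/eigenvalueP; exists (row i P).
    by rewrite AcE rowE !mulmxA mulmxtVK // delta_mul_diag -scalemxAl.
  apply/negP => /eqP Pi0.
  have : (delta_mx 0 i : 'rV_n) *m P *m invmx P = 0 by rewrite -rowE Pi0 mul0mx.
  rewrite mulmxK // => /rowP /(_ i); rewrite !mxE !eqxx /=.
  by move/eqP; rewrite oner_eq0.
pose xc : 'rV[R[i]]_n := toC x.
have xcT : xc^t* = xc^T.
  by apply/matrixP => i j; rewrite !mxE conj_Creal ?complex_real.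
have qformE : real_complex R (qform A x) = (xc *m Ac *m xc^t* ) 0 0.
  by rewrite xcT /xc /Ac map_trmx -!map_mxM mxE.
have dotE' : real_complex R (dot x x) = (xc *m xc^t* ) 0 0.
  by rewrite xcT /xc map_trmx -!map_mxM mxE.
set w := xc *m P^t*.
have wT : w^t* = P *m xc^t* by rewrite /w trmx_mul map_mxM trmxCK.
have qform_diag : (xc *m Ac *m xc^t* ) 0 0 = \sum_i d 0 i * `|w 0 i| ^+ 2.
  rewrite AcE !mulmxA -/w -mulmxA -wT mxE; apply: eq_bigr => i _.
  by rewrite mul_mx_diag !mxE normCK mulrCA mulrA.
have dot_diag : (xc *m xc^t* ) 0 0 = \sum_i `|w 0 i| ^+ 2.
  have -> : xc *m xc^t* = w *m w^t* by rewrite wT /w mulmxA mulmxKtV.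
  by rewrite mxE; apply: eq_bigr => i _; rewrite !mxE normCK.
have d_le i : `|d 0 i| <= real_complex R (spectral_radius A).
  have -> : `|d 0 i| = real_complex R (complex.Re `|d 0 i|) by rewrite normc_def.
  by rewrite lecR eigenvalue_le_spectral_radius.
rewrite -lecR -normC_real rmorphM /= qformE dotE' qform_diag dot_diag mulr_sumr.
rewrite (le_trans (ler_norm_sum _ _ _)) //; apply: ler_sum => i _.
by rewrite normrM normrX normr_id ler_wpM2r ?exprn_ge0.
Qed.

Lemma spectral_radius_ge0 n (A : 'M[R]_n.+1) : A^T = A -> 0 <= spectral_radius A.
Proof.
move=> sA; have := normr_qform_le_spectral_radius (delta_mx 0 ord0) sA.
by rewrite dot_delta mulr1; apply: le_trans.
Qed.

Lemma qformD n (A B : 'M[R]_n) u : qform (A + B) u = qform A u + qform B u.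
Proof. by rewrite /qform mulmxDr mulmxDl mxE. Qed.

Lemma qformZ n c (A : 'M[R]_n) u : qform (c *: A) u = c * qform A u.
Proof. by rewrite /qform -scalemxAr -scalemxAl mxE. Qed.

Lemma qform_congruence n p (D : 'M[R]_(n, p)) (A : 'M[R]_p) u :
  qform (D *m A *m D^T) u = qform A (u *m D).
Proof. by rewrite /qform trmx_mul !mulmxA. Qed.

Lemma qform_block_diag m n (A : 'M[R]_m) (B : 'M[R]_n) (a : 'rV_m) (b : 'rV_n) :
  qform (block_mx A 0 0 B) (row_mx a b) = qform A a + qform B b.
Proof.
rewrite /qform mul_row_block ?mulmx0 ?mul0mx ?addr0 ?add0r tr_row_mx mul_row_col.
by rewrite mxE.
Qed.

Lemma qform_diag n (d u : 'rV[R]_n) : qform (diag_mx d) u = \sum_p d 0 p * u 0 p ^+ 2.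
Proof. by rewrite /qform mul_mx_diag mxE; apply: eq_bigr => p _; rewrite !mxE; ring. Qed.

Section DiagonalScaling.
Variables (n : nat) (dv : 'rV[R]_n) (c : R).
Hypotheses (dv_gt0 : forall p, 0 < dv 0 p) (c_ge0 : 0 <= c).
Let S := diag_mx (\row_p (Num.sqrt (dv 0 p))^-1).

Let qform_scaled (H : 'M[R]_n) (x : 'rV[R]_n) :
  qform (c *: (S *m H *m S)) x = c * qform H (x *m S).
Proof. by rewrite qformZ -{2}[S]tr_diag_mx qform_congruence. Qed.

Let dot_scaled (x : 'rV[R]_n) : dot x x = qform (diag_mx dv) (x *m S).
Proof.
rewrite dotE qform_diag; apply: eq_bigr => p _.
rewrite mul_mx_diag !mxE exprMn exprVn sqr_sqrtr ?ltW // mulrCA divff ?gt_eqF //.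
by rewrite mulr1 expr2.
Qed.

Let scaling_surj (w : 'rV[R]_n) : exists x, x *m S = w.
Proof.
exists (w *m diag_mx (\row_p Num.sqrt (dv 0 p))).
rewrite -mulmxA mulmx_diag; apply/rowP => p; rewrite mul_mx_diag !mxE.
by rewrite divff ?mulr1 // gt_eqF // sqrtr_gt0.
Qed.

Lemma scaled_sym (H : 'M[R]_n) : H^T = H -> (c *: (S *m H *m S))^T = c *: (S *m H *m S).
Proof. by move=> sH; rewrite linearZ /= !trmx_mul tr_diag_mx sH mulmxA. Qed.

(* Rayleigh bounds for the generalized eigenproblem [c H x = lambda diag(dv) x]. *)
Lemma normr_qform_le_scaled_spectral_radius (H : 'M[R]_n) (w : 'rV[R]_n) : H^T = H ->
  c * `|qform H w| <= spectral_radius (c *: (S *m H *m S)) * qform (diag_mx dv) w.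
Proof.
move=> sH; have [x <-] := scaling_surj w.
have := normr_qform_le_spectral_radius x (scaled_sym sH).
by rewrite qform_scaled dot_scaled normrM ger0_norm.
Qed.

Lemma scaled_spectral_radius_le (H : 'M[R]_n) (M : R) : (0 < n)%N -> H^T = H ->
  (forall w : 'rV[R]_n, c * `|qform H w| <= M * qform (diag_mx dv) w) ->
  spectral_radius (c *: (S *m H *m S)) <= M.
Proof.
move=> n_gt0 sH leM; apply: spectral_radius_le n_gt0 (scaled_sym sH) _ => x.
by rewrite qform_scaled dot_scaled normrM ger0_norm.
Qed.
End DiagonalScaling.
End RealSymmetricMatrices.

Section KroneckerEntries.
Variable R : comPzRingType.

Lemma sum_mxtens_index (V : nmodType) m n (F : 'I_(m * n) -> V) :
  \sum_p F p = \sum_(a < m) \sum_(b < n) F (mxtens_index (a, b)).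
Proof.
rewrite pair_big /= (reindex (@mxtens_index m n)) /=.
  by apply: eq_bigr => -[a b].
by exists (@mxtens_unindex m n) => x _; rewrite ?mxtens_indexK ?mxtens_unindexK.
Qed.

Lemma sum_nat_delta n k (F : 'I_n.+1 -> R) : (k <= n)%N ->
  \sum_(q < n.+1) ((q : nat) == k)%:R * F q = F (inord k).
Proof.
move=> le_kn; rewrite (bigD1 (inord k)) //= inordK // eqxx mul1r big1 ?addr0 //.
move=> q /negPf qk; rewrite (_ : (q : nat) == k = false) ?mul0r //.
by apply: contraFF qk => /eqP <-; rewrite inord_val.
Qed.

Lemma mulmx_tens_entry m n m' n' (v : 'rV[R]_(m * n)) (A : 'M_(m, m'))
    (B : 'M_(n, n')) (a : 'I_m') (c : 'I_n') :
  (v *m (A *t B)) 0 (mxtens_index (a, c)) =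
  \sum_(a' < m) \sum_(b < n) v 0 (mxtens_index (a', b)) * (A a' a * B b c).
Proof.
rewrite mxE sum_mxtens_index; apply: eq_bigr => a' _.
by apply: eq_bigr => b _; rewrite tensmxE.
Qed.

Local Notation slice v a := (\row_b v 0 (mxtens_index (a, b))).

Lemma mulmx_tens1l_entry m n n' (v : 'rV[R]_(m * n)) (B : 'M_(n, n'))
    (a : 'I_m) (c : 'I_n') :
  (v *m (1%:M *t B)) 0 (mxtens_index (a, c)) = (slice v a *m B) 0 c.
Proof.
rewrite mulmx_tens_entry (bigD1 a) //= [X in _ + X]big1 ?addr0 => [|a' /negPf a'a].
  by rewrite [RHS]mxE; apply: eq_bigr => b _; rewrite !mxE eqxx mul1r.
by apply: big1 => b _; rewrite mxE a'a mul0r mulr0.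
Qed.

Lemma mulmx_tens1r_entry m n m' (v : 'rV[R]_(m * n)) (A : 'M_(m, m'))
    (a : 'I_m') (c : 'I_n) :
  (v *m (A *t 1%:M)) 0 (mxtens_index (a, c)) =
  ((\row_a' v 0 (mxtens_index (a', c))) *m A) 0 a.
Proof.
rewrite mulmx_tens_entry mxE; apply: eq_bigr => a' _.
rewrite (bigD1 c) //= [X in _ + X]big1 ?addr0 => [|b /negPf bc].
  by rewrite !mxE eqxx mulr1.
by rewrite mxE bc mulr0 mulr0.
Qed.

Lemma tensmx_diag m n (d1 : 'rV[R]_m) (d2 : 'rV[R]_n) :
  diag_mx d1 *t diag_mx d2 =
  diag_mx (\row_p (d1 0 (mxtens_unindex p).1 * d2 0 (mxtens_unindex p).2)).
Proof.
apply/matrixP => p q; case: (mxtens_indexP p) => a b; case: (mxtens_indexP q) => c e.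
rewrite tensmxE !mxE mxtens_indexK /= (inj_eq (can_inj (@mxtens_indexK m n))).
by rewrite xpair_eqE mulrnAl mulrnAr -mulrnA mulnb andbC.
Qed.

Lemma tensmx11 m n : (1%:M *t 1%:M : 'M[R]_(m * n)) = 1%:M.
Proof.
apply/matrixP => p q; case: (mxtens_indexP p) => a b; case: (mxtens_indexP q) => c e.
rewrite tensmxE !mxE (inj_eq (can_inj (@mxtens_indexK m n))) xpair_eqE.
by rewrite -natrM mulnb.
Qed.
End KroneckerEntries.

Section TrapezoidalSums.
Variable R : realType.

Definition trapw (n i : nat) : R := if (i == 0)%N || (i == n) then 2^-1 else 1.

Lemma trapw_gt0 n i : 0 < trapw n i.
Proof. by rewrite /trapw; case: ifP; rewrite ?invr_gt0 ?ltr0n ?ltr01. Qed.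

Lemma trapw1 (a : nat) : (a < 2)%N -> trapw 1 a = 2^-1.
Proof. by case: a => [|[|]]. Qed.

Lemma Itil_diag n : Itil R n = diag_mx (\row_(i < n.+1) trapw n i).
Proof. by congr diag_mx; apply/rowP => i; rewrite !mxE. Qed.

(* [wsum true n f] weights the [n.+1] nodes [0..n] by the trapezoidal weights
   of [Itil]; [wsum false n f] sums over the [n] edges with unit weights. *)
Definition wsum (node : bool) (n : nat) (f : nat -> R) : R :=
  if node then \sum_(k < n.+1) trapw n k * f k else \sum_(k < n) f k.

Lemma eq_wsum (node : bool) n f g :
  (forall k, (k < n + node)%N -> f k = g k) -> wsum node n f = wsum node n g.
Proof.
by case: node => fg; apply: eq_bigr => k _; rewrite fg ?addn1 ?addn0.
Qed.

Lemma wsum_sum node n p (F : nat -> 'I_p -> R) :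
  wsum node n (fun k => \sum_(i < p) F k i) = \sum_(i < p) wsum node n (fun k => F k i).
Proof.
rewrite /wsum; case: node; last exact: exchange_big.
by rewrite exchange_big /=; apply: eq_bigr => k _; rewrite mulr_sumr.
Qed.

Lemma wsum_cells node n f : (0 < n)%N ->
  wsum node n f = \sum_(k < n) wsum node 1 (fun a => f (k + a)%N).
Proof.
case: n => // n _; rewrite /wsum; case: node; last first.
  by apply: eq_bigr => k _; rewrite big_ord1 addn0.
under [RHS]eq_bigr => k _ do rewrite big_ord_recr big_ord1 /= !trapw1 // addn0 addn1.
rewrite big_split /= -!mulr_sumr big_ord_recr big_ord_recl /=.
rewrite [\sum_(i < n.+1) f i]big_ord_recl [\sum_(i < n.+1) f i.+1]big_ord_recr /=.
have -> : \sum_(i < n) trapw n.+1 (bump 0 i) * f (bump 0 i) = \sum_(i < n) f i.+1.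
  apply: eq_bigr => i _; rewrite /trapw /bump /= eqSS.
  by rewrite (ltn_eqF (ltn_ord i)) mul1r.
rewrite /trapw !eqxx orbT /bump /=; lra.
Qed.

Lemma wsumZ node n c f : wsum node n (fun k => c * f k) = c * wsum node n f.
Proof. by rewrite /wsum; case: node; rewrite mulr_sumr; apply: eq_bigr => k _; ring. Qed.

Lemma wsum_indicator0 node n (f : nat -> R) : (0 < n)%N ->
  wsum node n (fun k => (k == 0)%:R * f k) = (if node then trapw n 0 else 1) * f 0%N.
Proof.
case: n => // n _; rewrite /wsum; case: node;
  by rewrite big_ord_recl /= big1 ?addr0 ?mul1r // => k _; rewrite mul0r ?mulr0.
Qed.

Definition wsum3 (b3 b2 b1 : bool) (n3 n2 n1 : nat) (G : nat -> nat -> nat -> R) :=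
  wsum b3 n3 (fun k => wsum b2 n2 (fun j => wsum b1 n1 (fun i => G k j i))).

Lemma eq_wsum3 (b3 b2 b1 : bool) n3 n2 n1 G G' :
  (forall k j i, (k < n3 + b3)%N -> (j < n2 + b2)%N -> (i < n1 + b1)%N ->
     G k j i = G' k j i) ->
  wsum3 b3 b2 b1 n3 n2 n1 G = wsum3 b3 b2 b1 n3 n2 n1 G'.
Proof.
move=> GG'; apply: eq_wsum => k hk; apply: eq_wsum => j hj; apply: eq_wsum => i hi.
exact: GG'.
Qed.

Lemma wsum3_cells b3 b2 b1 n3 n2 n1 G :
  (0 < n3)%N -> (0 < n2)%N -> (0 < n1)%N ->
  wsum3 b3 b2 b1 n3 n2 n1 G = \sum_(i < n1) \sum_(j < n2) \sum_(k < n3)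
     wsum3 b3 b2 b1 1 1 1 (fun a b c => G (k + a)%N (j + b)%N (i + c)%N).
Proof.
move=> n3_gt0 n2_gt0 n1_gt0; rewrite /wsum3.
under eq_wsum => k _ do under eq_wsum => j _ do rewrite wsum_cells //.
under eq_wsum => k _ do rewrite wsum_sum.
under eq_wsum => k _ do under eq_bigr => i _ do rewrite wsum_cells //.
rewrite wsum_sum; apply: eq_bigr => i _; rewrite wsum_sum; apply: eq_bigr => j _.
exact: wsum_cells.
Qed.

Lemma wsum3_indicator0 b3 b2 b1 n3 n2 n1 :
  (0 < n3)%N -> (0 < n2)%N -> (0 < n1)%N ->
  wsum3 b3 b2 b1 n3 n2 n1 (fun k j i => (k == 0)%:R * ((j == 0)%:R * ((i == 0)%:R * 1))) =
  (if b3 then trapw n3 0 else 1) * ((if b2 then trapw n2 0 else 1) *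
    ((if b1 then trapw n1 0 else 1) * 1)).
Proof.
move=> n3_gt0 n2_gt0 n1_gt0; rewrite /wsum3.
under eq_wsum => k _ do under eq_wsum => j _ do rewrite !wsumZ wsum_indicator0 //.
under eq_wsum => k _ do rewrite wsumZ wsum_indicator0 //.
exact: wsum_indicator0.
Qed.

Lemma wsum3_lin b3 b2 b1 n3 n2 n1 (c : R) G G' :
  wsum3 b3 b2 b1 n3 n2 n1 (fun k j i => c * G k j i + G' k j i) =
  c * wsum3 b3 b2 b1 n3 n2 n1 G + wsum3 b3 b2 b1 n3 n2 n1 G'.
Proof.
rewrite /wsum3 /wsum; case: b3; case: b2; case: b1;
  rewrite mulr_sumr -big_split; apply: eq_bigr => k _ /=;
  rewrite ?mulr_sumr -?big_split; apply: eq_bigr => j _ /=;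
  rewrite ?mulr_sumr -?big_split; apply: eq_bigr => i _ /=; ring.
Qed.

Lemma wsum3_nodes n3 n2 n1 G : wsum3 true true true n3 n2 n1 G =
  \sum_(k < n3.+1) \sum_(j < n2.+1) \sum_(i < n1.+1)
     trapw n3 k * trapw n2 j * trapw n1 i * G k j i.
Proof.
rewrite /wsum3 /wsum; apply: eq_bigr => k _; rewrite mulr_sumr; apply: eq_bigr => j _.
by rewrite !mulr_sumr; apply: eq_bigr => i _; ring.
Qed.

Lemma wsum3_xedges n3 n2 n1 G : wsum3 true true false n3 n2 n1 G =
  \sum_(k < n3.+1) \sum_(j < n2.+1) \sum_(i < n1) trapw n3 k * trapw n2 j * G k j i.
Proof.
rewrite /wsum3 /wsum; apply: eq_bigr => k _; rewrite mulr_sumr; apply: eq_bigr => j _.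
by rewrite !mulr_sumr; apply: eq_bigr => i _; ring.
Qed.

Lemma wsum3_yedges n3 n2 n1 G : wsum3 true false true n3 n2 n1 G =
  \sum_(k < n3.+1) \sum_(j < n2) \sum_(i < n1.+1) trapw n3 k * trapw n1 i * G k j i.
Proof.
rewrite /wsum3 /wsum; apply: eq_bigr => k _; rewrite mulr_sumr; apply: eq_bigr => j _.
by rewrite !mulr_sumr; apply: eq_bigr => i _; ring.
Qed.

Lemma wsum3_zedges n3 n2 n1 G : wsum3 false true true n3 n2 n1 G =
  \sum_(k < n3) \sum_(j < n2.+1) \sum_(i < n1.+1) trapw n2 j * trapw n1 i * G k j i.
Proof.
rewrite /wsum3 /wsum; apply: eq_bigr => k _; apply: eq_bigr => j _.
by rewrite !mulr_sumr; apply: eq_bigr => i _; ring.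
Qed.
End TrapezoidalSums.

Section DifferenceMatrix.
Variable R : realType.

Lemma Wmx_entry n (i : 'I_n) (q : 'I_n.+1) :
  Wmx R n i q = ((q : nat) == i.+1)%:R - ((q : nat) == i)%:R.
Proof.
rewrite /Wmx !mxE castmxE /= mxE.
case: splitP => [j /= qj|j /= qj]; case: splitP => [j' /= qj'|j' /= qj']; rewrite !mxE.
all: rewrite -?val_eqE /= ?qj.
all: try change (@nat_of_ord (1 + n) q) with (@nat_of_ord n.+1 q) in qj.
all: move: (ltn_ord i) (ltn_ord j) (ltn_ord j') (ltn_ord q) qj qj'.
all: rewrite -/(nat_of_ord q) => ? ? ? ? ? ?.
all: repeat (case: eqP => /= ?); rewrite ?(subrr, subr0, sub0r) //; exfalso; lia.
Qed.

Lemma mulmx_trWmx_entry n (w : 'rV[R]_n.+1) (i : 'I_n) :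
  (w *m (Wmx R n)^T) 0 i = w 0 (inord i.+1) - w 0 (inord i).
Proof.
rewrite mxE; under eq_bigr => q _ do rewrite mxE Wmx_entry mulrBr.
rewrite sumrB -!sum_nat_delta ?(ltn_ord i) ?(ltnW (ltn_ord i)) //.
by congr (_ - _); apply: eq_bigr => q _; rewrite mulrC.
Qed.
End DifferenceMatrix.

Section RegionForms.
Variable R : realType.
Variables (hbar m dx dy dz : R) (nx ny nz : nat).
Variable U : 'I_nx.+1 -> 'I_ny.+1 -> 'I_nz.+1 -> R.
Local Notation N := (nz.+1 * (ny.+1 * nx.+1))%N.

(* [(k, j, i)] are the 0-based z-, y- and x-coordinates of a node; out-of-range
   values are truncated by [inord]. *)
Definition node_index (k j i : nat) : 'I_N :=
  mxtens_index (inord k, mxtens_index (inord j, inord i)).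
Definition nodev (u : 'rV[R]_N) k j i := u 0 (node_index k j i).

Lemma node_index_val (k : 'I_nz.+1) (j : 'I_ny.+1) (i : 'I_nx.+1) :
  node_index k j i = mxtens_index (k, mxtens_index (j, i)).
Proof. by rewrite /node_index !inord_val. Qed.

Definition xdiff2 (u : 'rV[R]_N) k j i := (nodev u k j i.+1 - nodev u k j i) ^+ 2.
Definition ydiff2 (u : 'rV[R]_N) k j i := (nodev u k j.+1 i - nodev u k j i) ^+ 2.
Definition zdiff2 (u : 'rV[R]_N) k j i := (nodev u k.+1 j i - nodev u k j i) ^+ 2.
Definition nodev2 (u : 'rV[R]_N) k j i := nodev u k j i ^+ 2.
Definition potv2 (u : 'rV[R]_N) k j i :=
  U (inord i) (inord j) (inord k) * nodev u k j i ^+ 2.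

Lemma mulmx_Dx_entry (u : 'rV[R]_N) (k : 'I_nz.+1) (j : 'I_ny.+1) (i : 'I_nx) :
  (u *m Dx R nx ny nz) 0 (mxtens_index (k, mxtens_index (j, i))) =
  - (nodev u k j i.+1 - nodev u k j i).
Proof.
rewrite /Dx mulmxN mxE !mulmx_tens1l_entry mulmx_trWmx_entry !mxE.
by rewrite /nodev /node_index !inord_val.
Qed.

Lemma mulmx_Dy_entry (u : 'rV[R]_N) (k : 'I_nz.+1) (j : 'I_ny) (i : 'I_nx.+1) :
  (u *m Dy R nx ny nz) 0 (mxtens_index (k, mxtens_index (j, i))) =
  - (nodev u k j.+1 i - nodev u k j i).
Proof.
rewrite /Dy mulmxN mxE mulmx_tens1l_entry mulmx_tens1r_entry mulmx_trWmx_entry.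
by rewrite !mxE /nodev /node_index !inord_val.
Qed.

Lemma mulmx_Dz_entry (u : 'rV[R]_N) (k : 'I_nz) (j : 'I_ny.+1) (i : 'I_nx.+1) :
  (u *m Dz R nx ny nz) 0 (mxtens_index (k, mxtens_index (j, i))) =
  - (nodev u k.+1 j i - nodev u k j i).
Proof.
rewrite /Dz mulmxN mxE tensmx11 mulmx_tens1r_entry mulmx_trWmx_entry.
by rewrite !mxE /nodev /node_index !inord_val.
Qed.

Lemma qform_DV (u : 'rV[R]_N) :
  qform (DV dx dy dz nx ny nz) u = dx * dy * dz * wsum3 true true true nz ny nx (nodev2 u).
Proof.
rewrite /DV qformZ !Itil_diag !tensmx_diag qform_diag wsum3_nodes; congr (_ * _).
rewrite sum_mxtens_index; apply: eq_bigr => k _.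
rewrite sum_mxtens_index; apply: eq_bigr => j _; apply: eq_bigr => i _.
by rewrite !mxE !mxtens_indexK /= /nodev2 /nodev node_index_val mulrA.
Qed.

Lemma qform_potential (u : 'rV[R]_N) :
  qform (DV dx dy dz nx ny nz *m DU U) u =
  dx * dy * dz * wsum3 true true true nz ny nx (potv2 u).
Proof.
rewrite /DV -scalemxAl qformZ !Itil_diag !tensmx_diag /DU mulmx_diag qform_diag.
rewrite wsum3_nodes; congr (_ * _).
rewrite sum_mxtens_index; apply: eq_bigr => k _.
rewrite sum_mxtens_index; apply: eq_bigr => j _; apply: eq_bigr => i _.
by rewrite !mxE !mxtens_indexK /= /potv2 /nodev node_index_val !inord_val; ring.
Qed.

Local Notation dvs := (\row_p DV dx dy dz nx ny nz p p).

Lemma DV_diag_mx : DV dx dy dz nx ny nz = diag_mx dvs.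
Proof.
have [d ->] : exists d, DV dx dy dz nx ny nz = diag_mx d.
  by rewrite /DV !Itil_diag !tensmx_diag -linearZ; eexists.
by congr diag_mx; apply/rowP => p; rewrite !mxE eqxx.
Qed.

Lemma DVinvsqrt_diag_mx :
  DVinvsqrt dx dy dz nx ny nz = diag_mx (\row_p (Num.sqrt (dvs 0 p))^-1).
Proof. by congr diag_mx; apply/rowP => p; rewrite !mxE. Qed.

Lemma DV_diag_gt0 : 0 < dx -> 0 < dy -> 0 < dz -> forall p, 0 < dvs 0 p.
Proof.
move=> dx_gt0 dy_gt0 dz_gt0 p.
by rewrite mxE /DV !Itil_diag !tensmx_diag !mxE eqxx !mulr1n !mulr_gt0 ?trapw_gt0.
Qed.

Lemma qform_DV_ge0 (u : 'rV[R]_N) :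
  0 < dx -> 0 < dy -> 0 < dz -> 0 <= qform (DV dx dy dz nx ny nz) u.
Proof.
move=> dx_gt0 dy_gt0 dz_gt0; rewrite DV_diag_mx qform_diag sumr_ge0 // => p _.
by rewrite mulr_ge0 ?sqr_ge0 ?ltW ?DV_diag_gt0.
Qed.

Hypotheses (dx_neq0 : dx != 0) (dy_neq0 : dy != 0) (dz_neq0 : dz != 0).

Lemma invmx_Dl : invmx (Dl dx dy dz nx ny nz) =
  block_mx dx^-1%:M 0 0 (block_mx dy^-1%:M 0 0 dz^-1%:M).
Proof.
set B := block_mx _ _ _ _.
have DlB : Dl dx dy dz nx ny nz *m B = 1%:M.
  rewrite /Dl /B mulmx_block !mulmx0 !mul0mx !addr0 !add0r mulmx_block.
  rewrite !mulmx0 !mul0mx !addr0 !add0r -!scalar_mxM !divff //.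
  by rewrite -!scalar_mx_block.
have Dl_unit := (mulmx1_unit DlB).1.
by rewrite -[RHS](mulKmx Dl_unit) DlB mulmx1.
Qed.

Lemma DS_invDl : DS dx dy dz nx ny nz *m invmx (Dl dx dy dz nx ny nz) =
  block_mx ((dy * dz / dx) *: (Itil R nz *t (Itil R ny *t 1%:M))) 0 0
   (block_mx ((dx * dz / dy) *: (Itil R nz *t (1%:M *t Itil R nx))) 0 0
             ((dx * dy / dz) *: (1%:M *t (Itil R ny *t Itil R nx)))).
Proof.
rewrite invmx_Dl /DS mulmx_block !mulmx0 !mul0mx !addr0 !add0r mulmx_block.
by rewrite !mulmx0 !mul0mx !addr0 !add0r !mul_mx_scalar !scalerA ![_^-1 * _]mulrC.
Qed.

Lemma qform_kinetic (u : 'rV[R]_N) :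
  qform (Dmx R nx ny nz *m DS dx dy dz nx ny nz *m invmx (Dl dx dy dz nx ny nz)
         *m (Dmx R nx ny nz)^T) u =
  dy * dz / dx * wsum3 true true false nz ny nx (xdiff2 u)
  + dx * dz / dy * wsum3 true false true nz ny nx (ydiff2 u)
  + dx * dy / dz * wsum3 false true true nz ny nx (zdiff2 u).
Proof.
rewrite -(mulmxA (Dmx _ _ _ _)) qform_congruence DS_invDl /Dmx !mul_mx_row.
rewrite !qform_block_diag !qformZ -addrA -!diag_const_mx !Itil_diag !tensmx_diag.
rewrite !qform_diag wsum3_xedges wsum3_yedges wsum3_zedges.
congr (_ * _ + (_ * _ + _ * _)); rewrite sum_mxtens_index; apply: eq_bigr => k _;
  rewrite sum_mxtens_index; apply: eq_bigr => j _; apply: eq_bigr => i _.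
- by rewrite mulmx_Dx_entry !mxE !mxtens_indexK /= sqrrN mulr1.
- by rewrite mulmx_Dy_entry !mxE !mxtens_indexK /= sqrrN mul1r.
- by rewrite mulmx_Dz_entry !mxE !mxtens_indexK /= sqrrN mul1r.
Qed.

Lemma qform_H (u : 'rV[R]_N) : qform (Hmx hbar m dx dy dz U) u =
  hbar ^+ 2 / (2 * m) * (dy * dz / dx * wsum3 true true false nz ny nx (xdiff2 u)
   + dx * dz / dy * wsum3 true false true nz ny nx (ydiff2 u)
   + dx * dy / dz * wsum3 false true true nz ny nx (zdiff2 u))
  + dx * dy * dz * wsum3 true true true nz ny nx (potv2 u).
Proof. by rewrite qformD qformZ qform_kinetic qform_potential. Qed.

Lemma Hmx_sym : (Hmx hbar m dx dy dz U)^T = Hmx hbar m dx dy dz U.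
Proof.
have sym_DS_invDl : (DS dx dy dz nx ny nz *m invmx (Dl dx dy dz nx ny nz))^T =
    DS dx dy dz nx ny nz *m invmx (Dl dx dy dz nx ny nz).
  rewrite DS_invDl !(tr_block_mx, trmx0, linearZ) /= !trmx_tens.
  by rewrite /Itil !tr_diag_mx !trmx1.
rewrite /Hmx linearD linearZ /= -(mulmxA (Dmx _ _ _ _)) trmx_mul trmx_mul trmxK sym_DS_invDl.
rewrite !mulmxA; congr (_ + _).
by rewrite /DV !Itil_diag !tensmx_diag -linearZ /DU trmx_mul !tr_diag_mx diag_mxC.
Qed.
End RegionForms.

Section CellDecomposition.
Variable R : realType.
Variables (hbar m dx dy dz : R) (nx ny nz : nat).
Variable U : 'I_nx.+1 -> 'I_ny.+1 -> 'I_nz.+1 -> R.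
Local Notation N := (nz.+1 * (ny.+1 * nx.+1))%N.
Hypotheses (dx_neq0 : dx != 0) (dy_neq0 : dy != 0) (dz_neq0 : dz != 0).
Hypotheses (nx_gt0 : (0 < nx)%N) (ny_gt0 : (0 < ny)%N) (nz_gt0 : (0 < nz)%N).

Definition cellv (w : 'rV[R]_N) (i j k : nat) : 'rV[R]_(2 * (2 * 2)) :=
  \row_p nodev w (k + (mxtens_unindex p).1)
                 (j + (mxtens_unindex (mxtens_unindex p).2).1)
                 (i + (mxtens_unindex (mxtens_unindex p).2).2).

Lemma nodev_cellv w i j k a b c : (a < 2)%N -> (b < 2)%N -> (c < 2)%N ->
  nodev (cellv w i j k) a b c = nodev w (k + a) (j + b) (i + c).
Proof.
by move=> a_lt2 b_lt2 c_lt2; rewrite /nodev /cellv mxE !mxtens_indexK /= !inordK.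
Qed.

Definition cellU (i : 'I_nx) (j : 'I_ny) (k : 'I_nz) (a b c : 'I_2) : R :=
  U (inord (i + a)) (inord (j + b)) (inord (k + c)).

Lemma qform_H_cellv w (i : 'I_nx) (j : 'I_ny) (k : 'I_nz) :
  qform (Hmx hbar m dx dy dz (cellU i j k)) (cellv w i j k) =
  hbar ^+ 2 / (2 * m) *
    (dy * dz / dx * wsum3 true true false 1 1 1
       (fun a b c => xdiff2 w (k + a) (j + b) (i + c))
   + dx * dz / dy * wsum3 true false true 1 1 1
       (fun a b c => ydiff2 w (k + a) (j + b) (i + c))
   + dx * dy / dz * wsum3 false true true 1 1 1
       (fun a b c => zdiff2 w (k + a) (j + b) (i + c)))
  + dx * dy * dz * wsum3 true true true 1 1 1
       (fun a b c => potv2 U w (k + a) (j + b) (i + c)).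
Proof.
rewrite qform_H //; congr (_ * (_ * _ + _ * _ + _ * _) + _ * _);
  apply: eq_wsum3 => a b c a_lt b_lt c_lt.
- by rewrite /xdiff2 !nodev_cellv ?addnS //; lia.
- by rewrite /ydiff2 !nodev_cellv ?addnS //; lia.
- by rewrite /zdiff2 !nodev_cellv ?addnS //; lia.
- rewrite /potv2 !nodev_cellv // /cellU !inordK //; lia.
Qed.

Lemma qform_H_cells w : qform (Hmx hbar m dx dy dz U) w =
  \sum_(i < nx) \sum_(j < ny) \sum_(k < nz)
     qform (Hmx hbar m dx dy dz (cellU i j k)) (cellv w i j k).
Proof.
rewrite qform_H // !wsum3_cells //.
do 3 (rewrite !mulr_sumr -!big_split !mulr_sumr -!big_split; apply: eq_bigr => ? _).
by rewrite qform_H_cellv.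
Qed.

Lemma qform_DV_cells w : qform (DV dx dy dz nx ny nz) w =
  \sum_(i < nx) \sum_(j < ny) \sum_(k < nz) qform (DV dx dy dz 1 1 1) (cellv w i j k).
Proof.
rewrite qform_DV wsum3_cells // mulr_sumr; apply: eq_bigr => i _.
rewrite mulr_sumr; apply: eq_bigr => j _; rewrite mulr_sumr; apply: eq_bigr => k _.
rewrite qform_DV; congr (_ * _); apply: eq_wsum3 => a b c a_lt b_lt c_lt.
by rewrite /nodev2 nodev_cellv.
Qed.
End CellDecomposition.

Section RegionSpectralRadius.
Variable R : realType.
Variables (hbar m dx dy dz : R) (nx ny nz : nat).
Variable U : 'I_nx.+1 -> 'I_ny.+1 -> 'I_nz.+1 -> R.
Local Notation N := (nz.+1 * (ny.+1 * nx.+1))%N.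
Hypotheses (hbar_gt0 : 0 < hbar) (dx_gt0 : 0 < dx) (dy_gt0 : 0 < dy) (dz_gt0 : 0 < dz).

Local Notation H := (Hmx hbar m dx dy dz U).
Local Notation S := (DVinvsqrt dx dy dz nx ny nz).
Local Notation rho := (spectral_radius (hbar^-1 *: (S *m H *m S))).

Let Hmx_sym' : H^T = H.
Proof. by apply: Hmx_sym; rewrite gt_eqF. Qed.

Lemma normr_qform_H_le (w : 'rV[R]_N) :
  hbar^-1 * `|qform H w| <= rho * qform (DV dx dy dz nx ny nz) w.
Proof.
rewrite DVinvsqrt_diag_mx [in X in _ <= _ * X]DV_diag_mx.
apply: normr_qform_le_scaled_spectral_radius Hmx_sym'.
- exact: DV_diag_gt0.
- by rewrite invr_ge0 ltW.
Qed.

Lemma spectral_radius_H_le (M : R) :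
  (forall w, hbar^-1 * `|qform H w| <= M * qform (DV dx dy dz nx ny nz) w) -> rho <= M.
Proof.
move=> leM; rewrite DVinvsqrt_diag_mx.
apply: scaled_spectral_radius_le Hmx_sym' _ => //.
- exact: DV_diag_gt0.
- by rewrite invr_ge0 ltW.
- by move=> w; rewrite -DV_diag_mx.
Qed.

Lemma spectral_radius_H_ge0 : 0 <= rho.
Proof. by apply: spectral_radius_ge0; rewrite DVinvsqrt_diag_mx scaled_sym. Qed.
End RegionSpectralRadius.

Section HamiltonianNondegenerate.
Variable R : realType.
Variables (hbar m dx dy dz : R) (nx ny nz : nat).
Variable U : 'I_nx.+1 -> 'I_ny.+1 -> 'I_nz.+1 -> R.
Local Notation N := (nz.+1 * (ny.+1 * nx.+1))%N.

Lemma nodev_delta a b c k j i :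
  (k <= nz)%N -> (j <= ny)%N -> (i <= nx)%N ->
  (a <= nz)%N -> (b <= ny)%N -> (c <= nx)%N ->
  nodev (delta_mx 0 (node_index nx ny nz a b c) : 'rV[R]_N) k j i =
  ((k == a) && (j == b) && (i == c))%:R.
Proof.
move=> *; rewrite /nodev mxE /= /node_index.
rewrite !(inj_eq (can_inj (@mxtens_indexK _ _))) !xpair_eqE.
by rewrite !(inj_eq (can_inj (@mxtens_indexK _ _))) !xpair_eqE -!val_eqE /= !inordK // andbA.
Qed.

Lemma nodevD (u v : 'rV[R]_N) k j i : nodev (u + v) k j i = nodev u k j i + nodev v k j i.
Proof. by rewrite /nodev mxE. Qed.

Lemma nodevB (u v : 'rV[R]_N) k j i : nodev (u - v) k j i = nodev u k j i - nodev v k j i.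
Proof. by rewrite /nodev !mxE. Qed.

Hypotheses (nx_gt0 : (0 < nx)%N) (ny_gt0 : (0 < ny)%N) (nz_gt0 : (0 < nz)%N).

(* Polarization along the x-edge between the nodes (0,0,0) and (1,0,0): only
   the kinetic x-term distinguishes [e0 + e1] from [e0 - e1]. *)
Lemma exists_qform_H_neq0 : hbar != 0 -> m != 0 -> dx != 0 -> dy != 0 -> dz != 0 ->
  exists w : 'rV[R]_N, qform (Hmx hbar m dx dy dz U) w != 0.
Proof.
move=> hbar_neq0 m_neq0 dx_neq0 dy_neq0 dz_neq0.
set e0 : 'rV[R]_N := delta_mx 0 (node_index nx ny nz 0 0 0).
set e1 : 'rV[R]_N := delta_mx 0 (node_index nx ny nz 0 0 1).
have xdiff k j i : (k < nz + true)%N -> (j < ny + true)%N -> (i < nx + false)%N ->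
    xdiff2 (e0 + e1) k j i =
    -4 * ((k == 0)%:R * ((j == 0)%:R * ((i == 0)%:R * 1))) + xdiff2 (e0 - e1) k j i.
  move=> lt_k lt_j lt_i; rewrite /xdiff2 !nodevB !nodevD !nodev_delta; try lia.
  by case: k {lt_k} => [|k]; case: j {lt_j} => [|j]; case: i {lt_i} => [|[|i]] /=; ring.
have ydiff k j i : (k < nz + true)%N -> (j < ny + false)%N -> (i < nx + true)%N ->
    ydiff2 (e0 + e1) k j i = ydiff2 (e0 - e1) k j i.
  move=> lt_k lt_j lt_i; rewrite /ydiff2 !nodevB !nodevD !nodev_delta; try lia.
  by case: k {lt_k} => [|k]; case: j {lt_j} => [|j]; case: i {lt_i} => [|[|i]] /=; ring.
have zdiff k j i : (k < nz + false)%N -> (j < ny + true)%N -> (i < nx + true)%N ->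
    zdiff2 (e0 + e1) k j i = zdiff2 (e0 - e1) k j i.
  move=> lt_k lt_j lt_i; rewrite /zdiff2 !nodevB !nodevD !nodev_delta; try lia.
  by case: k {lt_k} => [|k]; case: j {lt_j} => [|j]; case: i {lt_i} => [|[|i]] /=; ring.
have pot k j i : (k < nz + true)%N -> (j < ny + true)%N -> (i < nx + true)%N ->
    potv2 U (e0 + e1) k j i = potv2 U (e0 - e1) k j i.
  move=> lt_k lt_j lt_i; rewrite /potv2 !nodevB !nodevD !nodev_delta; try lia.
  by case: k {lt_k} => [|k]; case: j {lt_j} => [|j]; case: i {lt_i} => [|[|i]] /=; ring.
have polar : qform (Hmx hbar m dx dy dz U) (e0 + e1) - qform (Hmx hbar m dx dy dz U) (e0 - e1)
    = hbar ^+ 2 / (2 * m) * (dy * dz / dx) * (-4) * (trapw R nz 0 * trapw R ny 0).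
  rewrite !qform_H // (eq_wsum3 xdiff) wsum3_lin (eq_wsum3 ydiff) (eq_wsum3 zdiff).
  by rewrite (eq_wsum3 pot) wsum3_indicator0 //; ring.
have [qp|] := eqVneq (qform (Hmx hbar m dx dy dz U) (e0 + e1)) 0; last by exists (e0 + e1).
have [qm|] := eqVneq (qform (Hmx hbar m dx dy dz U) (e0 - e1)) 0; last by exists (e0 - e1).
move: polar; rewrite qp qm subrr => /esym/eqP.
by rewrite !(mulf_eq0, invr_eq0, oppr_eq0, pnatr_eq0, gt_eqF (trapw_gt0 _ _ _),
  negbTE hbar_neq0, negbTE m_neq0, negbTE dx_neq0, negbTE dy_neq0, negbTE dz_neq0).
Qed.
End HamiltonianNondegenerate.

Section CFLBound.
Variable R : realType.
Variables (hbar m dx dy dz : R) (nx ny nz : nat).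
Variable U : 'I_nx.+1 -> 'I_ny.+1 -> 'I_nz.+1 -> R.
Hypotheses (hbar_gt0 : 0 < hbar) (m_gt0 : 0 < m).
Hypotheses (dx_gt0 : 0 < dx) (dy_gt0 : 0 < dy) (dz_gt0 : 0 < dz).
Hypotheses (nx_gt0 : (0 < nx)%N) (ny_gt0 : (0 < ny)%N) (nz_gt0 : (0 < nz)%N).

Local Notation rho nx ny nz U :=
  (spectral_radius (hbar^-1 *: (DVinvsqrt dx dy dz nx ny nz *m
     Hmx hbar m dx dy dz U *m DVinvsqrt dx dy dz nx ny nz))).

Lemma cfl_gen_ge0 n1 n2 n3 (V : 'I_n1.+1 -> 'I_n2.+1 -> 'I_n3.+1 -> R) :
  0 <= cfl_gen hbar m dx dy dz V.
Proof. by rewrite divr_ge0 ?spectral_radius_H_ge0. Qed.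

Lemma spectral_radius_H_gt0 : 0 < rho nx ny nz U.
Proof.
have [w qw_neq0] := exists_qform_H_neq0 U nx_gt0 ny_gt0 nz_gt0
  (lt0r_neq0 hbar_gt0) (lt0r_neq0 m_gt0)
  (lt0r_neq0 dx_gt0) (lt0r_neq0 dy_gt0) (lt0r_neq0 dz_gt0).
have := normr_qform_H_le m U hbar_gt0 dx_gt0 dy_gt0 dz_gt0 w.
rewrite lt_def spectral_radius_H_ge0 // andbT; apply: contraTneq => ->.
by rewrite mul0r -ltNge mulr_gt0 ?invr_gt0 ?normr_gt0.
Qed.

Lemma spectral_radius_H_le_cells (M : R) :
  (forall i j k, rho 1 1 1 (cellU U i j k) <= M) -> rho nx ny nz U <= M.
Proof.
move=> le_cells; apply: spectral_radius_H_le => // w.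
have hbar_inv_ge0 : 0 <= hbar^-1 by rewrite invr_ge0 ltW.
rewrite qform_H_cells ?gt_eqF // qform_DV_cells // -[hbar^-1]ger0_norm //.
rewrite -normrM !mulr_sumr.
do 3 (apply: le_trans (ler_norm_sum _ _ _) _; apply: ler_sum => ? _; rewrite ?mulr_sumr).
rewrite normrM ger0_norm //.
apply: le_trans (normr_qform_H_le m _ hbar_gt0 dx_gt0 dy_gt0 dz_gt0 _) _.
by rewrite ler_wpM2r ?le_cells ?qform_DV_ge0.
Qed.

Lemma cfl_gen_ge_cells (t : R) : 0 < t ->
  (forall i j k, t <= cfl_cell hbar m dx dy dz U i j k) ->
  t <= cfl_gen hbar m dx dy dz U.
Proof.
move=> t_gt0 le_cells; rewrite /cfl_gen ler_pdivlMr ?spectral_radius_H_gt0 //.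
rewrite mulrC -ler_pdivlMr //; apply: spectral_radius_H_le_cells => i j k.
have := le_cells i j k; rewrite /cfl_cell /cfl_gen -/(cellU U i j k).
have [->|rho_neq0] := eqVneq (rho 1 1 1 (cellU U i j k)) 0.
  by rewrite invr0 mulr0 => /(lt_le_trans t_gt0); rewrite ltxx.
have rho_gt0 : 0 < rho 1 1 1 (cellU U i j k).
  by rewrite lt_def rho_neq0 spectral_radius_H_ge0.
by rewrite ler_pdivlMr // mulrC -ler_pdivlMr.
Qed.
End CFLBound.

Local Open Scope classical_set_scope.

Theorem lemma5 (R : realType) (hbar m dx dy dz : R) (nx ny nz : nat)
  (U : 'I_nx.+1 -> 'I_ny.+1 -> 'I_nz.+1 -> R) :
  0 < hbar -> 0 < m -> 0 < dx -> 0 < dy -> 0 < dz ->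
  (0 < nx)%N -> (0 < ny)%N -> (0 < nz)%N ->
  inf [set t : R | exists (i : 'I_nx) (j : 'I_ny) (k : 'I_nz),
                     t = cfl_cell hbar m dx dy dz U i j k]
  <= cfl_gen hbar m dx dy dz U.
Proof.
move=> hbar_gt0 m_gt0 dx_gt0 dy_gt0 dz_gt0 nx_gt0 ny_gt0 nz_gt0.
set cells := [set t | _].
have [inf_le0|inf_gt0] := lerP (inf cells) 0.
  by apply: le_trans inf_le0 _; apply: cfl_gen_ge0.
apply: cfl_gen_ge_cells => // i j k; apply: ge_inf; last by exists i, j, k.
by exists 0 => _ [i' [j' [k' ->]]]; apply: cfl_gen_ge0.
Qed.
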